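(* Let $a,b,c$ be positive integers with $c\geq b\geq a$, and suppose that at least one of the following holds: (1) $c=ka+lb$ for some integers $k,l\geq 0$; (2) $a$ divides $b$; (3) $a\leq 2$. Then there exists a tame polynomial automorphism $F$ of $\mathbb{C}^3$ with $\operatorname{mdeg} F=(a,b,c)$.
   Context: For a polynomial automorphism $F=(F_1,\ldots,F_n)$ of $\mathbb{C}^n$, its multidegree is $\operatorname{mdeg}F:=(\deg F_1,\ldots,\deg F_n)$, where $\deg$ is total degree. A map $F=(F_1,\ldots,F_n)$ is elementary if for some $j\leq n$ and some polynomial $g$ in $n-1$ variables, $F_j=X_j+g(X_1,\ldots,\widehat{X_j},\ldots,X_n)$ and $F_i=X_i$ for $i\neq j$. A polynomial automorphism is tame if it is a composition of invertible affine-linear maps and elementary maps. *)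

(* Polynomials in 3 variables over algC, encoded as
   {poly {poly {poly algC}}}: innermost variable X1, middle X2, outer X3. *)
From HB Require Import structures.
From mathcomp Require Import all_boot all_order all_algebra all_field.
Set Implicit Arguments. Unset Strict Implicit. Unset Printing Implicit Defensive.
Import Order.TTheory GRing.Theory Num.Theory.
Local Open Scope ring_scope.

Definition K := algC.
Definition P3 := {poly {poly {poly K}}}.

Definition i0 : 'I_3 := @Ordinal 3 0 isT.
Definition i1 : 'I_3 := @Ordinal 3 1 isT.
Definition i2 : 'I_3 := @Ordinal 3 2 isT.

Definition Xv (i : 'I_3) : P3 :=
  if i == i0 then ('X%:P)%:P else if i == i1 then 'X%:P else 'X.

Definition map3 := 'I_3 -> P3.

Definition idmap3 : map3 := Xv.

Definition cst (c : K) : P3 := c%:P%:P%:P.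
Definition ev1 (F : map3) (r : {poly K}) : P3 := (map_poly cst r).[F i0].
Definition ev2 (F : map3) (q : {poly {poly K}}) : P3 := (map_poly (ev1 F) q).[F i1].
Definition subst3 (P : P3) (F : map3) : P3 := (map_poly (ev2 F) P).[F i2].

Definition comp3 (F G : map3) : map3 := fun i => subst3 (F i) G.

(* total degree (degree of the zero polynomial is taken to be 0) *)
Definition tdeg1 (r : {poly K}) : nat := (size r).-1.
Definition tdeg2 (q : {poly {poly K}}) : nat :=
  \max_(j < size q | q`_j != 0) (j + tdeg1 q`_j)%N.
Definition tdeg (P : P3) : nat :=
  \max_(k < size P | P`_k != 0) (k + tdeg2 P`_k)%N.

Definition mdeg (F : map3) : nat * nat * nat :=
  (tdeg (F i0), tdeg (F i1), tdeg (F i2)).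

Definition is_poly_aut (F : map3) : Prop :=
  exists G : map3, comp3 F G = idmap3 /\ comp3 G F = idmap3.

Definition free_of (j : 'I_3) (g : P3) : Prop :=
  subst3 g (fun i => if i == j then 0 else Xv i) = g.

Definition elementary (F : map3) : Prop :=
  exists (j : 'I_3) (g : P3), free_of j g /\
    F j = Xv j + g /\ (forall i, i != j -> F i = Xv i).

Definition affine_inv (F : map3) : Prop :=
  exists (A : 'M[K]_3) (b : 'I_3 -> K), A \in unitmx /\
    forall i, F i = \sum_(j < 3) cst (A i j) * Xv j + cst (b i).

Inductive tame : map3 -> Prop :=
| tame_affine F : affine_inv F -> tame F
| tame_elem F : elementary F -> tame F
| tame_comp F G : tame F -> tame G -> tame (comp3 F G).

From HB Require Import structures.
From mathcomp Require Import all_boot all_order all_algebra all_field.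
From mathcomp Require Import zify.
From Stdlib Require Import FunctionalExtensionality.
Set Implicit Arguments. Unset Strict Implicit. Unset Printing Implicit Defensive.
Import Order.TTheory GRing.Theory Num.Theory.
Local Open Scope ring_scope.

(* Two explicit families of triangular maps suffice:
   - the shear map (X1 + X3^a, X2 + X3^b, X3 + F1^k F2^l), where F1, F2 are
     its first two components, has multidegree (a, b, ka + lb) as soon as
     ka + lb >= 2; it handles c = ka + lb;
   - the chain map (X1 + X3^a, X2 + F1^m, X3 + X2^c) has multidegree
     (a, am, c); it handles b = am.
   Each map is a composite of three elementary maps, hence tame, and has an
   explicit polynomial inverse.  The hypothesis a <= 2 reduces to one of the
   two cases by a parity argument ([degree_cases]).

   Total degrees are bounded above by a "degree bound" predicate closed
   under sums and products; it is lifted once from a coefficient ring to its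
   polynomial ring and iterated over the three nested variables.  They are
   bounded below by exhibiting a nonzero coefficient: for both families it is
   the leading coefficient in X3 of a product of monic polynomials. *)

Local Notation X1 := (Xv i0).
Local Notation X2 := (Xv i1).
Local Notation X3 := (Xv i2).

Lemma ord3P (P : 'I_3 -> Prop) : P i0 -> P i1 -> P i2 -> forall i, P i.
Proof.
by move=> H0 H1 H2 [[|[|[|?]]] Hi] //; [move: H0|move: H1|move: H2];
  congr P; apply: val_inj.
Qed.

Record degree_bound (R : nzRingType) := DegreeBound {
  within :> nat -> R -> Prop;
  within0 : forall d, within d 0;
  withinD : forall d x y, within d x -> within d y -> within d (x + y);
  within_mono : forall d e x, (d <= e)%N -> within d x -> within e x;
  withinM : forall d e x y, within d x -> within e y -> within (d + e) (x * y);
  within1 : within 0 1 }.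

Lemma withinX (R : nzRingType) (B : degree_bound R) d x n :
  B d x -> B (d * n)%N (x ^+ n).
Proof.
move=> Hx; elim: n => [|n IH]; first by rewrite muln0 expr0; apply: within1.
by rewrite exprS mulnS; apply: withinM.
Qed.

Section PolyBound.
Variables (R : nzRingType) (B : degree_bound R).

Definition poly_within (d : nat) (p : {poly R}) : Prop :=
  forall j, ((d < j)%N -> p`_j = 0) /\ B (d - j)%N p`_j.

Lemma poly_within0 d : poly_within d 0.
Proof. by move=> j; rewrite coef0; split=> //; apply: within0. Qed.

Lemma poly_withinD d p q :
  poly_within d p -> poly_within d q -> poly_within d (p + q).
Proof.
move=> Hp Hq j; have [Hp1 Hp2] := Hp j; have [Hq1 Hq2] := Hq j.
rewrite coefD; split; first by move=> h; rewrite Hp1 // Hq1 // addr0.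
exact: withinD.
Qed.

Lemma poly_within_mono d e p : (d <= e)%N -> poly_within d p -> poly_within e p.
Proof.
move=> de Hp j; have [Hp1 Hp2] := Hp j; split.
  by move=> h; apply: Hp1; lia.
by apply: within_mono Hp2; lia.
Qed.

(* Each term p_i q_(j-i) of the convolution has degree at most
   (d - i) + (e - (j - i)) = d + e - j, or vanishes. *)
Lemma poly_withinM d e p q :
  poly_within d p -> poly_within e q -> poly_within (d + e) (p * q).
Proof.
move=> Hp Hq j; rewrite coefM; split.
  move=> h; apply: big1 => [[i /= hi]] _.
  have [hid|hid] := leqP i d; last by rewrite (proj1 (Hp i)) ?mul0r.
  by rewrite (proj1 (Hq (j - i)%N)) ?mulr0 //; lia.
apply: (big_ind (B (d + e - j)%N)); [exact: within0|exact: withinD|].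
move=> [i /= hi] _.
have [hid|hid] := leqP i d; last by rewrite (proj1 (Hp i)) ?mul0r //; apply: within0.
have [hje|hje] := leqP (j - i) e; last first.
  by rewrite (proj1 (Hq (j - i)%N)) ?mulr0 //; apply: within0.
have -> : (d + e - j = (d - i) + (e - (j - i)))%N by lia.
by apply: withinM; [exact: (proj2 (Hp i))|exact: (proj2 (Hq (j - i)%N))].
Qed.

Lemma poly_withinC d c : B d c -> poly_within d c%:P.
Proof.
move=> Hc j; rewrite coefC.
by case: eqP => [->|_]; split; rewrite ?subn0 //; apply: within0.
Qed.

Lemma poly_within1 : poly_within 0 1.
Proof. exact/poly_withinC/within1. Qed.

Definition poly_bound : degree_bound {poly R} :=
  DegreeBound poly_within0 poly_withinD poly_within_mono poly_withinM poly_within1.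

Lemma poly_withinX : poly_within 1 'X.
Proof.
move=> j; rewrite coefX; case: eqP => [->|_]; split; rewrite ?subnn //.
  exact: within1.
exact: within0.
Qed.
End PolyBound.

Definition trivial_bound : degree_bound K :=
  @DegreeBound K (fun _ _ => True) (fun _ => I) (fun _ _ _ _ _ => I)
    (fun _ _ _ _ _ => I) (fun _ _ _ _ _ _ => I) I.

Definition deg_le (d : nat) (P : P3) : Prop :=
  poly_bound (poly_bound (poly_bound trivial_bound)) d P.

Lemma deg_le_Xv i : deg_le 1 (Xv i).
Proof.
rewrite /deg_le /Xv; case: ifP => _; last case: ifP => _.
- by do 2 apply: poly_withinC; apply: poly_withinX.
- by apply: poly_withinC; apply: poly_withinX.
- exact: poly_withinX.
Qed.

Lemma deg_le_Xv_exp i n : deg_le n (Xv i ^+ n).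
Proof. by have := withinX n (deg_le_Xv i); rewrite mul1n. Qed.

Lemma deg_le_shift i j n : (0 < n)%N -> deg_le n (Xv i + Xv j ^+ n).
Proof.
move=> n0; apply: withinD; last exact: deg_le_Xv_exp.
exact: within_mono n0 (deg_le_Xv i).
Qed.

Lemma tdeg1_le d (r : {poly K}) : poly_within trivial_bound d r -> (tdeg1 r <= d)%N.
Proof.
move=> H; suff : (size r <= d.+1)%N by rewrite /tdeg1; case: (size r).
by apply/leq_sizeP => j hj; apply: (proj1 (H j)).
Qed.

Lemma tdeg2_le d (q : {poly {poly K}}) :
  poly_within (poly_bound trivial_bound) d q -> (tdeg2 q <= d)%N.
Proof.
move=> H; apply/bigmax_leqP => [[j /= _]] nz; have [H1 H2] := H j.
have hjd : (j <= d)%N by rewrite leqNgt; apply: contra nz => /H1 ->.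
by rewrite -leq_subRL //; apply: tdeg1_le.
Qed.

Lemma tdeg_le d P : deg_le d P -> (tdeg P <= d)%N.
Proof.
move=> H; apply/bigmax_leqP => [[k /= _]] nz; have [H1 H2] := H k.
have hkd : (k <= d)%N by rewrite leqNgt; apply: contra nz => /H1 ->.
by rewrite -leq_subRL //; apply: tdeg2_le.
Qed.

Lemma size_gt_coef (R : nzSemiRingType) (p : {poly R}) i :
  p`_i != 0 -> (i < size p)%N.
Proof. by rewrite ltnNge; apply: contra => /(nth_default 0) ->. Qed.

Lemma tdeg1_ge (r : {poly K}) i : r`_i != 0 -> (i <= tdeg1 r)%N.
Proof. by move/size_gt_coef; rewrite /tdeg1; case: (size r). Qed.

Lemma tdeg2_ge (q : {poly {poly K}}) j i : (q`_j)`_i != 0 -> (j + i <= tdeg2 q)%N.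
Proof.
move=> nz; have nzj : q`_j != 0 by apply: contraNneq nz => ->; rewrite coef0.
apply: leq_trans (leq_bigmax_cond (Ordinal (size_gt_coef nzj)) nzj) => /=.
by rewrite leq_add2l tdeg1_ge.
Qed.

Lemma tdeg_ge (P : P3) k j i : ((P`_k)`_j)`_i != 0 -> (k + j + i <= tdeg P)%N.
Proof.
move=> nz; have nzk : P`_k != 0 by apply: contraNneq nz => ->; rewrite !coef0.
apply: leq_trans (leq_bigmax_cond (Ordinal (size_gt_coef nzk)) nzk) => /=.
by rewrite -addnA leq_add2l tdeg2_ge.
Qed.

Lemma tdeg_witness d (P : P3) k j i :
  deg_le d P -> ((P`_k)`_j)`_i != 0 -> (k + j + i)%N = d -> tdeg P = d.
Proof. by move=> Hd nz e; apply/eqP; rewrite eqn_leq tdeg_le //= -e tdeg_ge. Qed.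

Lemma tdeg_monicX3 d (P : P3) : deg_le d P -> P`_d = 1 -> tdeg P = d.
Proof.
move=> Hd Pd; apply: (tdeg_witness (k := d) (j := 0) (i := 0)) Hd _ _.
  by rewrite Pd !coef1 oner_neq0.
by rewrite !addn0.
Qed.

Lemma coef_monic_prod (R : idomainType) (x y : R) a b k l :
  (0 < a)%N -> (0 < b)%N ->
  (('X^a + x%:P) ^+ k * ('X^b + y%:P) ^+ l)`_(a * k + b * l) = 1.
Proof.
move=> a0 b0; set p := ('X^a + x%:P) ^+ k; set q := ('X^b + y%:P) ^+ l.
have mp : p \is monic by apply/monic_exp/monicXnaddC.
have mq : q \is monic by apply/monic_exp/monicXnaddC.
have sp : (size p).-1 = (a * k)%N by rewrite size_exp size_XnaddC.
have sq : (size q).-1 = (b * l)%N by rewrite size_exp size_XnaddC.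
suff <- : (size (p * q)).-1 = (a * k + b * l)%N by apply/monicP; rewrite monicMl.
have [p0 q0] := (monic_neq0 mp, monic_neq0 mq).
by move: (size_poly_gt0 p) (size_poly_gt0 q); rewrite size_mul // p0 q0; lia.
Qed.

Lemma coef_Xv_const i n : i != i2 -> (0 < n)%N -> (Xv i)`_n = 0.
Proof. by elim/ord3P: i => // _ n0; rewrite coefC gtn_eqF. Qed.

Lemma coef_shifted_prod a b k l : (0 < a)%N -> (0 < b)%N ->
  ((X1 + X3 ^+ a) ^+ k * (X2 + X3 ^+ b) ^+ l)`_(a * k + b * l) = 1.
Proof. by move=> a0 b0; rewrite !(addrC (Xv _)) coef_monic_prod. Qed.

Lemma tdeg_var_add i n Q : (Xv i)`_n = 0 -> (0 < n)%N ->
  deg_le n Q -> Q`_n = 1 -> tdeg (Xv i + Q) = n.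
Proof.
move=> Xn n0 HQ Qn; apply: tdeg_monicX3; last by rewrite coefD Xn Qn add0r.
by apply: withinD HQ; apply: within_mono n0 (deg_le_Xv i).
Qed.

Lemma tdeg_shift_X3 i n : i != i2 -> (0 < n)%N -> tdeg (Xv i + X3 ^+ n) = n.
Proof.
move=> ni n0; apply: tdeg_var_add; rewrite ?coef_Xv_const ?coefXn ?eqxx //.
exact: deg_le_Xv_exp.
Qed.

Definition cst_morph : {rmorphism K -> P3} := ((polyC \o polyC) \o polyC)%FUN.

Section Substitution.
Variable F : map3.

Lemma comm_X1 : commr_rmorph cst_morph (F i0).
Proof. by move=> x; exact: mulrC. Qed.
Lemma comm_X2 : commr_rmorph (horner_morph comm_X1) (F i1).
Proof. by move=> x; exact: mulrC. Qed.
Lemma comm_X3 : commr_rmorph (horner_morph comm_X2) (F i2).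
Proof. by move=> x; exact: mulrC. Qed.

Lemma subst3E P : subst3 P F = horner_morph comm_X3 P. Proof. by []. Qed.

Lemma substD P Q : subst3 (P + Q) F = subst3 P F + subst3 Q F.
Proof. by rewrite !subst3E rmorphD. Qed.
Lemma substN P : subst3 (- P) F = - subst3 P F.
Proof. by rewrite !subst3E rmorphN. Qed.
Lemma substM P Q : subst3 (P * Q) F = subst3 P F * subst3 Q F.
Proof. by rewrite !subst3E rmorphM. Qed.
Lemma substXn P n : subst3 (P ^+ n) F = subst3 P F ^+ n.
Proof. by rewrite !subst3E rmorphXn. Qed.

Lemma substV i : subst3 (Xv i) F = F i.
Proof.
elim/ord3P: i; rewrite subst3E /Xv /=.
- rewrite (horner_morphC comm_X3).
  exact: etrans (horner_morphC comm_X2 _) (horner_morphX comm_X1).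
- by rewrite (horner_morphC comm_X3); apply: horner_morphX.
- exact: horner_morphX.
Qed.
End Substitution.

Definition subst_simpl := (substN, substD, substM, substXn, substV).

Definition mk3 (f g h : P3) : map3 :=
  fun i => if i == i0 then f else if i == i1 then g else h.

Lemma map3_ext (F G : map3) : F i0 = G i0 -> F i1 = G i1 -> F i2 = G i2 -> F = G.
Proof. by move=> *; apply: functional_extensionality; apply: ord3P. Qed.

Lemma tame_shift1 g : free_of i0 g -> tame (mk3 (X1 + g) X2 X3).
Proof. by move=> fg; apply: tame_elem; exists i0, g; do !split=> //; apply: ord3P. Qed.
Lemma tame_shift2 g : free_of i1 g -> tame (mk3 X1 (X2 + g) X3).
Proof. by move=> fg; apply: tame_elem; exists i1, g; do !split=> //; apply: ord3P. Qed.
Lemma tame_shift3 g : free_of i2 g -> tame (mk3 X1 X2 (X3 + g)).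
Proof. by move=> fg; apply: tame_elem; exists i2, g; do !split=> //; apply: ord3P. Qed.

Section ShearMap.
Variables a b k l : nat.

Definition shear_map : map3 :=
  mk3 (X1 + X3 ^+ a) (X2 + X3 ^+ b) (X3 + (X1 + X3 ^+ a) ^+ k * (X2 + X3 ^+ b) ^+ l).

Lemma shear_map_aut : is_poly_aut shear_map.
Proof.
pose H3 := X3 - X1 ^+ k * X2 ^+ l.
exists (mk3 (X1 - H3 ^+ a) (X2 - H3 ^+ b) H3).
by split; apply: map3_ext; rewrite /comp3 /= !subst_simpl /= ?subrK ?addrK.
Qed.

Lemma shear_map_tame : tame shear_map.
Proof.
have -> : shear_map = comp3 (mk3 X1 X2 (X3 + X1 ^+ k * X2 ^+ l))
            (comp3 (mk3 (X1 + X3 ^+ a) X2 X3) (mk3 X1 (X2 + X3 ^+ b) X3)).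
  by apply: map3_ext; rewrite /comp3 /= !subst_simpl.
apply: tame_comp; last apply: tame_comp.
- by apply: tame_shift3; rewrite /free_of !subst_simpl.
- by apply: tame_shift1; rewrite /free_of !subst_simpl.
- by apply: tame_shift2; rewrite /free_of !subst_simpl.
Qed.

(* The third component is monic of degree ka + lb in X3; for ka + lb = 1
   the summand X3 would interfere. *)
Lemma shear_map_mdeg : (0 < a)%N -> (0 < b)%N -> (2 <= k * a + l * b)%N ->
  mdeg shear_map = (a, b, k * a + l * b)%N.
Proof.
move=> a0 b0 c2; rewrite /mdeg /= !tdeg_shift_X3 //; congr (_, _).
rewrite /shear_map /mk3 /= mulnC [(l * b)%N]mulnC in c2 *.
apply: tdeg_var_add.
- by rewrite /Xv /= coefX gtn_eqF.
- exact: ltnW c2.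
- by apply: withinM; apply: withinX; apply: deg_le_shift.
- exact: coef_shifted_prod.
Qed.
End ShearMap.

Section ChainMap.
Variables a m c : nat.

Definition chain_map : map3 :=
  mk3 (X1 + X3 ^+ a) (X2 + (X1 + X3 ^+ a) ^+ m) (X3 + X2 ^+ c).

Lemma chain_map_aut : is_poly_aut chain_map.
Proof.
pose H2 := X2 - X1 ^+ m; pose H3 := X3 - H2 ^+ c.
exists (mk3 (X1 - H3 ^+ a) H2 H3).
by split; apply: map3_ext; rewrite /comp3 /= !subst_simpl /= ?subrK ?addrK.
Qed.

Lemma chain_map_tame : tame chain_map.
Proof.
have -> : chain_map = comp3 (mk3 X1 (X2 + X1 ^+ m) X3)
            (comp3 (mk3 X1 X2 (X3 + X2 ^+ c)) (mk3 (X1 + X3 ^+ a) X2 X3)).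
  by apply: map3_ext; rewrite /comp3 /= !subst_simpl.
apply: tame_comp; last apply: tame_comp.
- by apply: tame_shift2; rewrite /free_of !subst_simpl.
- by apply: tame_shift3; rewrite /free_of !subst_simpl.
- by apply: tame_shift1; rewrite /free_of !subst_simpl.
Qed.

(* The second component is monic of degree am in X3; the third contains the
   monomial X2^c. *)
Lemma chain_map_mdeg : (0 < a)%N -> (0 < m)%N -> (0 < c)%N ->
  mdeg chain_map = (a, a * m, c)%N.
Proof.
move=> a0 m0 c0; rewrite /mdeg /chain_map /mk3 /= tdeg_shift_X3 //.
congr (_, _, _).
  apply: tdeg_var_add.
  - by rewrite coef_Xv_const // muln_gt0 a0.
  - by rewrite muln_gt0 a0.
  - exact: withinX m (deg_le_shift i0 i2 a0).
  - by have := coef_shifted_prod m 0 a0 a0; rewrite expr0 mulr1 muln0 addn0.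
apply: (tdeg_witness (k := 0) (j := c) (i := 0)).
- exact: deg_le_shift.
- by rewrite coefD /Xv /= coefX add0r -polyC_exp coefC coefXn !eqxx coef1 oner_neq0.
- by rewrite addn0.
Qed.
End ChainMap.

(* Under the hypotheses of the theorem, either c >= 2 is a nonnegative
   combination of a and b, or a divides b.  For a = 2 and b odd: if c is odd
   then c = 2 (c - b)/2 + b, otherwise c = 2 (c/2). *)
Lemma degree_cases a b c : (0 < a)%N -> (a <= b)%N -> (b <= c)%N ->
  ((exists k l : nat, c = (k * a + l * b)%N) \/ (a %| b)%N \/ (a <= 2)%N) ->
  (2 <= c)%N /\ (exists k l : nat, c = (k * a + l * b)%N) \/ (a %| b)%N.
Proof.
move=> a0 ab bc [kl | [dab | a2]]; [|by right|].
- have [c2 | c1] := leqP 2 c; first by left.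
  by right; have -> : a = b by lia.
- have [a1 | a2'] : a = 1%N \/ a = 2%N by lia.
    by right; rewrite a1 dvd1n.
  subst a; case ob : (odd b); last by right; rewrite dvdn2 ob.
  left; split; first by lia.
  case oc : (odd c).
  + exists (c - b)./2, 1%N; have := odd_double_half (c - b).
    by rewrite oddB // oc ob /= -muln2; lia.
  + by exists c./2, 0%N; have := odd_double_half c; rewrite oc -muln2; lia.
Qed.

Theorem fact1 (a b c : nat) :
  (0 < a)%N -> (a <= b)%N -> (b <= c)%N ->
  ((exists k l : nat, c = (k * a + l * b)%N) \/ (a %| b)%N \/ (a <= 2)%N) ->
  exists F : map3, is_poly_aut F /\ tame F /\ mdeg F = (a, b, c).
Proof.
move=> a0 ab bc /(degree_cases a0 ab bc) [[c2 [k [l ce]]] | /dvdnP [m bm]].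
- exists (shear_map a b k l); do !split.
  + exact: shear_map_aut.
  + exact: shear_map_tame.
  + by rewrite shear_map_mdeg -?ce //; lia.
- have m0 : (0 < m)%N.
    by move: (leq_trans a0 ab); rewrite bm muln_gt0 => /andP[].
  exists (chain_map a m c); do !split.
  + exact: chain_map_aut.
  + exact: chain_map_tame.
  + by rewrite chain_map_mdeg //; [rewrite bm mulnC | lia].
Qed.
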